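(* Let $(I,J,\emptyset)$ be a reduced presentation with $J\neq\emptyset$, and let $\mathcal Q=\mathcal Q[I,J]$. If $I{\downarrow}\cap J{\downarrow}\supsetneq\{1\}$, then $\mathcal Q$ is not primitive.
   Context: $\mathbf Q(\mathcal K)=\mathbf{ISPP}_u(\mathcal K)$. $\mathbf{\L}_n$ is the Wajsberg hoop on $\{0,\dots,n\}$ with $ab=\max\{a+b-n,0\}$, $a\to b=\min\{n-a+b,n\}$; $\mathbf{\L}_{n,k}$ is the Wajsberg hoop on $\{(r,s)\in\mathbb Z^2:(0,0)\le(r,s)\le(n,k)\}$ (lexicographic order) with the analogous operations using componentwise addition and $u=(n,k)$. $X{\downarrow}$ = set of divisors of elements of $X$. A presentation $(I,J,\emptyset)$ is reduced if $I\cup J\ne\emptyset$, no $m\in I$ divides any element of $(I\setminus\{m\})\cup J$, and no $n\in J$ divides any element of $J\setminus\{n\}$. $\mathcal Q[I,J]=\mathbf Q(\{\mathbf{\L}_i:i\in I\}\cup\{\mathbf{\L}_{j,1}:j\in J\})$. A quasivariety is primitive if every subquasivariety $\mathcal Q'$ satisfies $\mathcal Q'=\mathbf H(\mathcal Q')\cap\mathcal Q$, equivalently every subquasivariety is structural (structural: for every subquasivariety $\mathcal Q''$, $\mathbf H(\mathcal Q'')=\mathbf H(\mathcal Q')$ implies $\mathcal Q''=\mathcal Q'$). *)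

From mathcomp Require Import all_boot all_order all_algebra.
From mathcomp Require Import zify.
Set Implicit Arguments. Unset Strict Implicit. Unset Printing Implicit Defensive.
Import Order.TTheory GRing.Theory Num.Theory.

Record hoopalg := HoopAlg {
  carrier :> Type;
  hmul : carrier -> carrier -> carrier;
  himp : carrier -> carrier -> carrier;
  hone : carrier }.

Definition hclass := hoopalg -> Prop.

Definition ultrafilter (Idx : Type) (U : (Idx -> Prop) -> Prop) : Prop :=
  [/\ U (fun _ => True),
      ~ U (fun _ => False),
      (forall S T : Idx -> Prop, U S -> (forall i, S i -> T i) -> U T),
      (forall S T : Idx -> Prop, U S -> U T -> U (fun i => S i /\ T i)) &
      (forall S : Idx -> Prop, U S \/ U (fun i => ~ S i))].

(* Q(K) = ISPP_u(K): A is (isomorphic to) a subalgebra of a direct product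
   (indexed by X) of ultraproducts (the x-th one indexed by Idx x, with
   ultrafilter U x) of members of K.  The map f picks representatives:
   the induced map A -> prod_x (prod_i B x i / U x) is a homomorphism
   (the equations hold U x-almost everywhere) and is injective. *)
Definition Qgen (K : hclass) : hclass := fun A =>
  exists (X : Type) (Idx : X -> Type)
         (U : forall x, (Idx x -> Prop) -> Prop)
         (B : forall x, Idx x -> hoopalg)
         (f : A -> forall x (i : Idx x), B x i),
    (forall x, ultrafilter (U x)) /\ (forall x i, K (B x i)) /\
    [/\
        (forall (a b : A) x,
           U x (fun i => f (hmul a b) x i = hmul (f a x i) (f b x i))),
        (forall (a b : A) x,
           U x (fun i => f (himp a b) x i = himp (f a x i) (f b x i))),
        (forall x, U x (fun i => f (hone A) x i = hone (B x i))) &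
        (forall a b : A,
           (forall x, U x (fun i => f a x i = f b x i)) -> a = b)].

Definition hhom (A B : hoopalg) (h : A -> B) : Prop :=
  [/\ (forall a b, h (hmul a b) = hmul (h a) (h b)),
      (forall a b, h (himp a b) = himp (h a) (h b)) &
      h (hone A) = hone B].

Definition Hop (C : hclass) : hclass := fun A =>
  exists (B : hoopalg) (h : B -> A), C B /\ hhom h /\ (forall a, exists b, h b = a).

Definition is_quasivariety (C : hclass) : Prop := forall A, C A <-> Qgen C A.

Definition subquasivariety (C' C : hclass) : Prop :=
  is_quasivariety C' /\ (forall A, C' A -> C A).

Definition primitive (C : hclass) : Prop :=
  forall C', subquasivariety C' C -> forall A, C' A <-> (Hop C' A /\ C A).

Lemma luk_mul_lt (n : nat) (a b : 'I_n.+1) : (a + b - n < n.+1)%N.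
Proof. have := ltn_ord a; have := ltn_ord b; lia. Qed.

Lemma luk_imp_lt (n : nat) (a b : 'I_n.+1) : (minn (n - a + b) n < n.+1)%N.
Proof. lia. Qed.

Definition Luk (n : nat) : hoopalg :=
  @HoopAlg 'I_n.+1
    (fun a b => Ordinal (luk_mul_lt a b))         (* max(a+b-n,0) *)
    (fun a b => Ordinal (luk_imp_lt a b))
    ord_max.

(* The Wajsberg hoop L_{n,k} on {(r,s) in Z^2 : (0,0) <= (r,s) <= (n,k)}
   with the lexicographic order. *)
Local Open Scope ring_scope.

Definition lexle (p q : int * int) : bool :=
  (p.1 < q.1) || ((p.1 == q.1) && (p.2 <= q.2)).
Definition lexmax (p q : int * int) := if lexle p q then q else p.
Definition lexmin (p q : int * int) := if lexle p q then p else q.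
Definition padd (p q : int * int) : int * int := (p.1 + q.1, p.2 + q.2).
Definition psub (p q : int * int) : int * int := (p.1 - q.1, p.2 - q.2).

Definition lukk_top (n k : nat) : int * int := ((n : int), (k : int)).
Definition in_lukk (n k : nat) (p : int * int) : bool :=
  lexle (0, 0) p && lexle p (lukk_top n k).

Definition lukk_car (n k : nat) := {p : int * int | in_lukk n k p}.

Lemma lukk_mul_in (n k : nat) (a b : lukk_car n k) :
  in_lukk n k (lexmax (psub (padd (val a) (val b)) (lukk_top n k)) (0, 0)).
Proof.
case: a b => [[r s] /= Ha] [[r' s'] /= Hb].
move: Ha Hb; rewrite /in_lukk /lexmax /lexle /padd /psub /lukk_top /=.
case: ifP => /=; lia.
Qed.

Lemma lukk_imp_in (n k : nat) (a b : lukk_car n k) :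
  in_lukk n k (lexmin (padd (psub (lukk_top n k) (val a)) (val b)) (lukk_top n k)).
Proof.
case: a b => [[r s] /= Ha] [[r' s'] /= Hb].
move: Ha Hb; rewrite /in_lukk /lexmin /lexle /padd /psub /lukk_top /=.
case: ifP => /=; lia.
Qed.

Lemma lukk_top_in (n k : nat) : in_lukk n k (lukk_top n k).
Proof. rewrite /in_lukk /lexle /lukk_top /=; lia. Qed.

Definition Lukk (n k : nat) : hoopalg :=
  @HoopAlg (lukk_car n k)
    (fun a b => exist (in_lukk n k) _ (lukk_mul_in a b))
    (fun a b => exist (in_lukk n k) _ (lukk_imp_in a b))
    (exist (in_lukk n k) _ (lukk_top_in n k)).

Local Close Scope ring_scope.

(* Presentations (I, J, emptyset), with I, J finite sets of positive
   integers represented by sequences (only membership matters).        *)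
Definition reduced (I J : seq nat) : Prop :=
  [/\ I ++ J <> [::],
      (forall m, m \in I -> forall x,
          ((x \in I) && (x != m)) || (x \in J) -> ~~ (m %| x)) &
      (forall n, n \in J -> forall x, (x \in J) && (x != n) -> ~~ (n %| x))].

Definition divdown (X : seq nat) (d : nat) : Prop := exists2 x, x \in X & d %| x.

Definition QIJ (I J : seq nat) : hclass :=
  Qgen (fun A => (exists2 i, i \in I & A = Luk i) \/
                 (exists2 j, j \in J & A = Lukk j 1)).

(* Pick d >= 2 dividing some i in I and some j in J, and let Q' = Q(L_{d,1}).
   Since L_{d,1} embeds into L_{j,1}, Q' is a subquasivariety of Q[I,J].  The hoop
   L_d is a homomorphic image of L_{d,1} (project onto the first coordinate) and
   embeds into L_i, so L_d lies in H(Q') and in Q[I,J].  But L_d is not in Q':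
   the quasi-identity  x^(d+1) = x^d & (x -> x^d) = x^(d-1)  =>  x = 1  holds in
   L_{d,1}, because it would force d * (u - x) = u for the top u = (d, 1), while
   it fails in L_d at x = d - 1.  Hence Q' <> H(Q') /\ Q[I,J]. *)

From mathcomp Require Import all_boot all_order all_algebra zify.
From Stdlib Require Import Classical ClassicalEpsilon.

Record Qrep (K : hclass) (A : hoopalg) := QRep {
  rX : Type;
  rIdx : rX -> Type;
  rU : forall x, (rIdx x -> Prop) -> Prop;
  rB : forall x, rIdx x -> hoopalg;
  rf : A -> forall x (i : rIdx x), rB x i;
  rUf : forall x, ultrafilter (rU x);
  rK : forall x i, K (rB x i);
  rmul : forall (a b : A) x,
    rU x (fun i => rf (hmul a b) x i = hmul (rf a x i) (rf b x i));
  rimp : forall (a b : A) x,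
    rU x (fun i => rf (himp a b) x i = himp (rf a x i) (rf b x i));
  rone : forall x, rU x (fun i => rf (hone A) x i = hone (rB x i));
  rinj : forall a b : A, (forall x, rU x (fun i => rf a x i = rf b x i)) -> a = b }.

Arguments rX {K A}. Arguments rIdx {K A}. Arguments rU {K A}. Arguments rB {K A}.
Arguments rf {K A}. Arguments rUf {K A}. Arguments rK {K A}. Arguments rmul {K A}.
Arguments rimp {K A}. Arguments rone {K A}. Arguments rinj {K A}.

Set Implicit Arguments. Unset Strict Implicit. Unset Printing Implicit Defensive.
Import Num.Theory.

Lemma QgenE K A : Qgen K A <-> inhabited (Qrep K A).
Proof.
split=> [[X [Idx [U [B [f [hU [hK [h1 h2 h3 h4]]]]]]]]|[[X Idx U B f hU hK h1 h2 h3 h4]]].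
  by constructor; exact: (@QRep K A X Idx U B f hU hK h1 h2 h3 h4).
by exists X, Idx, U, B, f.
Qed.

Section Ultrafilter.
Variables (T : Type) (U : (T -> Prop) -> Prop).
Hypothesis ufU : ultrafilter U.

Lemma uf_superset (S S' : T -> Prop) : U S -> (forall i, S i -> S' i) -> U S'.
Proof. by case: ufU => _ _ h _ _; apply: h. Qed.

Lemma uf_inter (S S' : T -> Prop) : U S -> U S' -> U (fun i => S i /\ S' i).
Proof. by case: ufU => _ _ _ h _; apply: h. Qed.

Lemma uf_full (S : T -> Prop) : (forall i, S i) -> U S.
Proof. by case: ufU => h _ _ _ _ hS; apply: (uf_superset h). Qed.

Lemma uf_witness (S : T -> Prop) : U S -> ~ (forall i, ~ S i).
Proof.
move=> hS hF; case: ufU => _ h _ _ _; apply: h.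
by apply: (uf_superset hS) => i /hF.
Qed.

Lemma uf_compl (S : T -> Prop) : U S \/ U (fun i => ~ S i).
Proof. by case: ufU => _ _ _ _ h. Qed.

End Ultrafilter.

Lemma uf_principal (T : Type) (t : T) : ultrafilter (fun S : T -> Prop => S t).
Proof.
split=> //; first by move=> S S' + h; apply: h.
by move=> S; apply: classic.
Qed.

Definition ufsum T (Idx : T -> Type) (U : (T -> Prop) -> Prop)
    (V : forall t, (Idx t -> Prop) -> Prop) (S : {t : T & Idx t} -> Prop) : Prop :=
  U (fun t => V t (fun j => S (existT Idx t j))).

Lemma uf_sum T (Idx : T -> Type) U V :
  ultrafilter U -> (forall t, ultrafilter (V t)) -> ultrafilter (@ufsum T Idx U V).
Proof.
move=> ufU ufV; split; rewrite /ufsum /=.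
- by apply: (uf_full ufU) => t; apply: uf_full.
- by move=> /(uf_witness ufU); apply=> t /(uf_witness (ufV t)); apply=> j [].
- move=> S S' hS hSS'; apply: (uf_superset ufU hS) => t ht.
  by apply: (uf_superset (ufV t) ht) => j; apply: hSS'.
- move=> S S' hS hS'; apply: (uf_superset ufU (uf_inter ufU hS hS')) => t [h h'].
  exact: uf_inter.
- move=> S; case: (uf_compl ufU (fun t => V t (fun j => S (existT Idx t j)))) => h.
    by left.
  right; apply: (uf_superset ufU h) => t ht.
  by case: (uf_compl (ufV t) (fun j => S (existT Idx t j))).
Qed.

Definition embeds (A B : hoopalg) : Prop := exists e : A -> B, hhom e /\ injective e.

Lemma Qgen_incl (K : hclass) A : K A -> Qgen K A.
Proof.
move=> KA; apply/QgenE; constructor.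
refine (@QRep K A unit (fun _ => unit) (fun _ S => S tt) (fun _ _ => A)
  (fun a _ _ => a) (fun _ => uf_principal tt) (fun _ _ => KA) _ _ _ _) => //.
by move=> a b /(_ tt).
Qed.

Lemma Qgen_embeds (K1 K2 : hclass) A :
    (forall B, K1 B -> exists2 B', K2 B' & embeds B B') ->
  Qgen K1 A -> Qgen K2 A.
Proof.
move=> emb /QgenE [r]; apply/QgenE; constructor.
have B' x i : {B' : hoopalg | K2 B' /\ embeds (rB r x i) B'}.
  apply: constructive_indefinite_description.
  by have [B' ? ?] := emb _ (rK r x i); exists B'.
have e x i : {e : rB r x i -> sval (B' x i) | hhom e /\ injective e}.
  by apply: constructive_indefinite_description; case: (svalP (B' x i)).
refine (@QRep K2 A (rX r) (rIdx r) (rU r) (fun x i => sval (B' x i))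
  (fun a x i => sval (e x i) (rf r a x i)) (rUf r)
  (fun x i => proj1 (svalP (B' x i))) _ _ _ _).
- move=> a b x; apply: (uf_superset (rUf r x) (rmul r a b x)) => i ->.
  by case: (svalP (e x i)) => -[-> _ _].
- move=> a b x; apply: (uf_superset (rUf r x) (rimp r a b x)) => i ->.
  by case: (svalP (e x i)) => -[_ -> _].
- move=> x; apply: (uf_superset (rUf r x) (rone r x)) => i ->.
  by case: (svalP (e x i)) => -[_ _ ->].
- move=> a b H; apply: (rinj r) => x; apply: (uf_superset (rUf r x) (H x)) => i.
  by case: (svalP (e x i)) => _; apply.
Qed.

Lemma Qrep_separate K A (r : Qrep K A) (a b : A) : inhabited (rX r) ->
  exists y, a = b \/ ~ rU r y (fun i => rf r a y i = rf r b y i).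
Proof.
move=> [x0]; case: (classic (a = b)) => [->|neq]; first by exists x0; left.
apply: NNPP => hn; apply: neq; apply: (rinj r) => y.
by apply: NNPP => h; apply: hn; exists y; right.
Qed.

Section QgenIdempotent.
Variables (K : hclass) (k0 : hoopalg).
Hypotheses (Kk0 : K k0) (mul11 : hmul (hone k0) (hone k0) = hone k0)
  (imp11 : himp (hone k0) (hone k0) = hone k0).

(* With no index at all A is trivial, so one copy of k0 represents it. *)
Lemma Qgen_inhabited_rep A : Qgen K A -> exists r : Qrep K A, inhabited (rX r).
Proof.
move=> /QgenE [r]; case: (classic (inhabited (rX r))) => [hX|hX]; first by exists r.
have trivA (a b : A) : a = b by apply: (rinj r) => x; case: hX; constructor.
exists (@QRep K A unit (fun _ => unit) (fun _ S => S tt) (fun _ _ => k0)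
  (fun _ _ _ => hone k0) (fun _ => uf_principal tt) (fun _ _ => Kk0)
  (fun _ _ _ => esym mul11) (fun _ _ _ => esym imp11) (fun _ => erefl)
  (fun a b _ => trivA a b)).
by constructor.
Qed.

Lemma Qgen_idem A : Qgen (Qgen K) A -> Qgen K A.
Proof.
move=> /QgenE [r]; apply/QgenE; constructor.
have R x i : {r' : Qrep K (rB r x i) | inhabited (rX r')}.
  exact/constructive_indefinite_description/Qgen_inhabited_rep/rK.
pose R' x i := sval (R x i).
pose X' := {x : rX r & forall i : rIdx r x, rX (R' x i)}.
pose Idx' (p : X') := {i : rIdx r (projT1 p) & rIdx (R' (projT1 p) i) (projT2 p i)}.
pose U' (p : X') := ufsum (rU r (projT1 p)) (fun i => rU (R' (projT1 p) i) (projT2 p i)).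
pose B' (p : X') (ij : Idx' p) := rB (R' _ (projT1 ij)) (projT2 p (projT1 ij)) (projT2 ij).
pose f' (a : A) (p : X') (ij : Idx' p) : B' p ij :=
  rf (R' _ (projT1 ij)) (rf r a _ (projT1 ij)) (projT2 p (projT1 ij)) (projT2 ij).
refine (@QRep K A X' Idx' U' B' f' _ _ _ _ _ _).
- by move=> p; apply: uf_sum => [|i]; apply: rUf.
- by move=> p ij; apply: rK.
- move=> a b [x s]; rewrite /U' /ufsum /=.
  apply: (uf_superset (rUf r x) (rmul r a b x)) => i E.
  by rewrite /f' /= E; apply: rmul.
- move=> a b [x s]; rewrite /U' /ufsum /=.
  apply: (uf_superset (rUf r x) (rimp r a b x)) => i E.
  by rewrite /f' /= E; apply: rimp.
- move=> [x s]; rewrite /U' /ufsum /=.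
  apply: (uf_superset (rUf r x) (rone r x)) => i E.
  by rewrite /f' /= E; apply: rone.
- move=> a b H; apply: (rinj r) => x; apply: NNPP => nP.
  have nU : rU r x (fun i => rf r a x i <> rf r b x i).
    by case: (uf_compl (rUf r x) (fun i => rf r a x i = rf r b x i)).
  have y i : {y | rf r a x i = rf r b x i \/ ~ rU (R' x i) y
      (fun j => rf (R' x i) (rf r a x i) y j = rf (R' x i) (rf r b x i) y j)}.
    exact/constructive_indefinite_description/Qrep_separate/(svalP (R x i)).
  have := H (existT _ x (fun i => sval (y i))); rewrite /U' /ufsum /= => HU.
  apply: (uf_witness (rUf r x) (uf_inter (rUf r x) HU nU)) => i [h1 h2].
  by case: (svalP (y i)).
Qed.

End QgenIdempotent.

(* [hpow a n] is the power a^(n+1). *)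
Fixpoint hpow (A : hoopalg) (a : A) (n : nat) : A :=
  if n is n'.+1 then hmul a (hpow a n') else a.

Lemma Qrep_hpow K A (r : Qrep K A) (a : A) x n :
  rU r x (fun i => rf r (hpow a n) x i = hpow (rf r a x i) n).
Proof.
elim: n => [|n IH] /=; first exact: (uf_full (rUf r x)).
apply: (uf_superset (rUf r x) (uf_inter (rUf r x) (rmul r a (hpow a n) x) IH)).
by move=> i [-> ->].
Qed.

(* The quasi-identity x^(d+1) = x^d & (x -> x^d) = x^(d-1) => x = 1, for d = n+2. *)
Definition pow_qi (n : nat) (A : hoopalg) : Prop :=
  forall x : A, hpow x n.+2 = hpow x n.+1 -> himp x (hpow x n.+1) = hpow x n -> x = hone A.

Lemma Qgen_pow_qi K n A : (forall B, K B -> pow_qi n B) -> Qgen K A -> pow_qi n A.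
Proof.
move=> qiK /QgenE [r] a E1 E2; apply: (rinj r) => x.
have ufx := rUf r x; have pow k := Qrep_hpow (r := r) a x k.
have P := uf_inter ufx (uf_inter ufx (pow n.+2) (pow n.+1))
  (uf_inter ufx (uf_inter ufx (pow n) (rimp r a (hpow a n.+1) x)) (rone r x)).
apply: (uf_superset ufx P) => i [[P2 P1] [[P0 Pimp] ->]].
apply: (qiK _ (rK r x i)); first by rewrite -P2 -P1 E1.
by rewrite -P1 -Pimp E2 P0.
Qed.

Lemma Luk_embeds d m : d %| m -> 0 < m -> embeds (Luk d) (Luk m).
Proof.
move=> /dvdnP [q ->] m_gt0; have q_gt0 : 0 < q by nia.
have lt (a : Luk d) : a * q < (q * d).+1 by have := ltn_ord a; nia.
exists (fun a => Ordinal (lt a)); split; first split.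
- by move=> a b; apply: val_inj => /=; nia.
- by move=> a b; apply: val_inj => /=; nia.
- by apply: val_inj => /=; nia.
- move=> a b /(f_equal val) /= /eqP; rewrite eqn_pmul2r // => /eqP.
  exact: val_inj.
Qed.

Lemma Luk_not_pow_qi n : ~ pow_qi n (Luk n.+2).
Proof.
pose a : Luk n.+2 := Ordinal (leqnSn n.+2).
have val_pow k : val (hpow a k) = n.+1 - k by elim: k => [|k IH] //=; rewrite IH; lia.
have E1 : hpow a n.+2 = hpow a n.+1 by apply: val_inj; rewrite !val_pow; lia.
have E2 : himp a (hpow a n.+1) = hpow a n by apply: val_inj; rewrite /= !val_pow; lia.
by move=> /(_ a E1 E2) /(f_equal val) /=; lia.
Qed.

Local Open Scope ring_scope.

Lemma Lukk_embeds d m : (d %| m)%N -> (0 < m)%N -> embeds (Lukk d 1) (Lukk m 1).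
Proof.
move=> /dvdnP [q ->] m_gt0; have q_gt0 : (0 < q)%N by nia.
have scale_in (p : Lukk d 1) : in_lukk (q * d) 1 (q%:Z * (val p).1, (val p).2).
  by case: p => [[r s] /=]; rewrite /in_lukk /lexle /lukk_top /= PoszM; nia.
exists (fun p => exist (in_lukk (q * d) 1) _ (scale_in p)); split; first split.
- move=> [[r s] Ha] [[r' s'] Hb]; apply: val_inj => /=.
  move: Ha Hb; rewrite /in_lukk /lexmax /lexle /padd /psub /lukk_top /= !PoszM => Ha Hb.
  by repeat case: ifP => /= ?; try (congr pair; nia); nia.
- move=> [[r s] Ha] [[r' s'] Hb]; apply: val_inj => /=.
  move: Ha Hb; rewrite /in_lukk /lexmin /lexle /padd /psub /lukk_top /= !PoszM => Ha Hb.
  by repeat case: ifP => /= ?; try (congr pair; nia); nia.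
- by apply: val_inj => /=; rewrite /lukk_top /= PoszM; congr pair; nia.
- move=> [[r s] Ha] [[r' s'] Hb] /(f_equal val) /= [E1 E2]; apply: val_inj => /=.
  by congr pair; nia.
Qed.

Lemma Lukk_onto_Luk d :
  exists h : Lukk d 1 -> Luk d, hhom h /\ forall a, exists b, h b = a.
Proof.
have lt (p : Lukk d 1) : (absz (val p).1 < d.+1)%N.
  by case: p => [[r s] /=]; rewrite /in_lukk /lexle /lukk_top /=; lia.
exists (fun p => Ordinal (lt p)); split; first split.
- move=> [[r s] Ha] [[r' s'] Hb]; apply: val_inj => /=.
  move: Ha Hb; rewrite /in_lukk /lexmax /lexle /padd /psub /lukk_top /= => Ha Hb.
  by repeat case: ifP => /= ?; lia.
- move=> [[r s] Ha] [[r' s'] Hb]; apply: val_inj => /=.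
  move: Ha Hb; rewrite /in_lukk /lexmin /lexle /padd /psub /lukk_top /= => Ha Hb.
  by repeat case: ifP => /= ?; lia.
- exact: val_inj.
- move=> a; have a_in : in_lukk d 1 (a%:Z, 0).
    by rewrite /in_lukk /lexle /lukk_top /=; have := ltn_ord a; lia.
  by exists (exist (in_lukk d 1) _ a_in); apply: val_inj.
Qed.

Lemma Lukk_one_idem d : hmul (hone (Lukk d 1)) (hone (Lukk d 1)) = hone (Lukk d 1) /\
  himp (hone (Lukk d 1)) (hone (Lukk d 1)) = hone (Lukk d 1).
Proof.
split; apply: val_inj; rewrite /= /lexmax /lexmin /lexle /padd /psub /lukk_top /=;
  by repeat case: ifP => /= ?; try (congr pair; lia); lia.
Qed.

(* [lukk_upow n x k] is (k+1)x - ku in Z^2, the power x^(k+1) of L_{n,1} before clipping at 0. *)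
Fixpoint lukk_upow (n : nat) (x : int * int) (k : nat) : int * int :=
  if k is k'.+1 then padd (lukk_upow n x k') (psub x (lukk_top n 1)) else x.

Lemma lukk_upow2 n x k : (lukk_upow n x k).2 = k.+1%:Z * x.2 - k%:Z.
Proof. by elim: k => [|k IH] /=; [lia | rewrite IH; nia]. Qed.

Lemma Lukk_hpow n (x : Lukk n 1) k : val (hpow x k) = lexmax (lukk_upow n (val x) k) (0, 0).
Proof.
case: x => [[r s] /= xin]; elim: k => [|k /= ->].
  by move: xin; rewrite /in_lukk /lexmax /lexle /=; case: ifP => //= ? ?; congr pair; lia.
case: (lukk_upow n (r, s) k) => q1 q2.
rewrite [lexmax (q1, q2) _]/lexmax; case: ifP; move: xin;
  rewrite /in_lukk /lexmax /lexle /padd /psub /lukk_top /= => xin q_clip;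
  by repeat case: ifP => /= ?; try (congr pair; lia); lia.
Qed.

Lemma Lukk_pow_qi n : pow_qi n (Lukk n.+2 1).
Proof.
move=> x /(f_equal val) E1 /(f_equal val) E2; apply: val_inj.
move: E1 E2 (lukk_upow2 n.+2 (val x) n.+1); rewrite /= !Lukk_hpow /=.
case: x => [[r s] /= xin].
(* The only nonlinear input: the top (n+2, 1) is not n+2 times an element of Z^2. *)
have nodiv : n.+2%:Z * s != n.+1%:Z by case: (lerP s 0) => ?; nia.
case: (lukk_upow n.+2 (r, s) n) => q1 q2; move: xin.
rewrite /in_lukk /lexmax /lexmin /lexle /padd /psub /lukk_top /= => xin.
by repeat case: ifP => /= ?; move=> E1 E2 S2; try case: E1 => ? ?;
  try case: E2 => ? ?; try (congr pair; lia); lia.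
Qed.

Local Close Scope ring_scope.

Theorem proposition4p13 (I J : seq nat) :
  (forall x, x \in I -> 0 < x) ->
  (forall x, x \in J -> 0 < x) ->
  reduced I J ->
  J <> [::] ->
  (* I{down} /\ J{down} strictly contains {1} *)
  ((forall d, d = 1 -> divdown I d /\ divdown J d) /\
   (exists d, divdown I d /\ divdown J d /\ d <> 1)) ->
  ~ primitive (QIJ I J).
Proof.
move=> I_gt0 J_gt0 _ _ [_ [d [[i iI di] [[j jJ dj] d_neq1]]]].
have i_gt0 := I_gt0 i iI.
have [n def_d] : exists n, d = n.+2 by have := dvdn_gt0 i_gt0 di; exists d.-2; lia.
subst d; pose K' B := B = Lukk n.+2 1; pose Q' := Qgen K'.
have [mul11 imp11] := Lukk_one_idem n.+2.
have Q'_sub : subquasivariety Q' (QIJ I J).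
  split=> A; first by split; [apply: Qgen_incl | apply: (Qgen_idem (K := K') erefl mul11 imp11)].
  apply: Qgen_embeds => _ ->; exists (Lukk j 1); first by right; exists j.
  exact: Lukk_embeds dj (J_gt0 j jJ).
move=> /(_ Q' Q'_sub (Luk n.+2)) [_ LQ']; apply: (@Luk_not_pow_qi n).
apply: Qgen_pow_qi (LQ' _) => [_ ->|]; first exact: Lukk_pow_qi.
split.
  have [h [hh h_onto]] := Lukk_onto_Luk n.+2.
  by exists (Lukk n.+2 1), h; split; first exact: Qgen_incl.
apply: Qgen_embeds (Qgen_incl (K := fun B => B = Luk n.+2) erefl) => _ ->.
by exists (Luk i); [left; exists i | exact: Luk_embeds di i_gt0].
Qed.
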